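(* Let $K\subset(-1,0)$ be compact and fix an integer $s$. For natural numbers $N\ge 2$ and $1\le a\le N-1$, let $b_{N,a}\colon K\to\mathbb{R}$ be real-valued functions, and suppose \[ \sup\{\,|b_{N,a}(q)| : N\ge 2,\ 1\le a\le N-1,\ q\in K\,\}<\infty. \] Then \[ \sup_{q\in K}\left|\sum_{a=1}^{N-1}\binom{N}{a}\, b_{N,a}(q)\, q^{a(N-a)+s}\right|\longrightarrow 0\qquad\text{as } N\to\infty. \] *)

From Stdlib Require Export Reals ZArith.
Open Scope R_scope.

Definition lemma_sum (b : nat -> nat -> R -> R) (s : Z) (N : nat) (q : R) : R :=
  sum_f 1 (N - 1)
    (fun a => Binomial.C N a * b N a q
              * powerRZ q (Z.of_nat (a * (N - a)) + s)%Z).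

(* Every term is controlled by C(N,a) |q|^(a(N-a)).  With k = min(a, N-a) we have
   C(N,a) <= N^k and 2 a (N-a) >= k N, so if |q| <= rho^2 with rho < 1, the term is
   at most (N rho^N)^k <= N rho^N as soon as N rho^N <= 1.  Summing the N-1 terms
   gives O(N^2 rho^N), which tends to 0.  Compactness of K inside (-1,0) yields such
   a rho uniformly in q, together with a lower bound on |q| that controls q^s. *)

From Stdlib Require Import Reals ZArith Lra Lia List RList.
Open Scope R_scope.

Lemma compact_continuous_lt_uniform (K : R -> Prop) (f : R -> R) (c : R) :
  compact K -> continuity f -> (forall x, K x -> f x < c) ->
  exists r, r < c /\ forall x, K x -> f x <= r.
Proof.
  intros HK Hf Hlt.
  assert (Hopen : forall t, open_set (fun y => y < t)).
  { intros t y Hy. exists (mkposreal (t - y) ltac:(lra)).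
    intros z Hz. unfold disc in Hz. simpl in Hz. apply Rabs_def2 in Hz. lra. }
  assert (Hind : forall t, (exists x, t < c /\ f x < t) -> t < c)
    by (intros t [x [Ht _]]; exact Ht).
  set (cover := mkfamily (fun t => t < c) (fun t x => t < c /\ f x < t) Hind).
  destruct (HK cover) as [D [Hcov [l Hl]]].
  { split.
    - intros x Hx. exists ((f x + c) / 2). simpl. specialize (Hlt x Hx). lra.
    - intros t x [Htc Hxt].
      destruct (proj1 (continuity_P3 f) Hf _ (Hopen t) x Hxt) as [del Hdel].
      exists del. intros y Hy. exact (conj Htc (Hdel y Hy)). }
  exists (MaxRlist ((c - 1) :: l)). split.
  - assert (Hin : In (MaxRlist ((c - 1) :: l)) ((c - 1) :: l))
      by (apply MaxRlist_P2; exists (c - 1); left; reflexivity).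
    destruct Hin as [<- | Hin]; [lra | exact (proj1 (proj2 (Hl _) Hin))].
  - intros x Hx. destruct (Hcov x Hx) as [t [[Htc Hxt] HDt]].
    assert (Htl : In t l) by (apply Hl; split; assumption).
    apply Rle_trans with t; [lra | apply MaxRlist_P1; right; exact Htl].
Qed.

Lemma compact_abs_bounds (K : R -> Prop) :
  compact K -> (forall q, K q -> 0 < Rabs q < 1) ->
  exists m r, 0 < m /\ 0 <= r < 1 /\ forall q, K q -> m <= Rabs q <= r.
Proof.
  intros HK HKabs.
  destruct (compact_continuous_lt_uniform K Rabs 1 HK Rcontinuity_abs)
    as [r [Hr Hup]]; [intros q Hq; apply HKabs, Hq |].
  destruct (compact_continuous_lt_uniform K (fun x => - Rabs x) 0 HK
              (continuity_opp _ Rcontinuity_abs)) as [r' [Hr' Hlow]].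
  { intros q Hq. specialize (HKabs q Hq). lra. }
  exists (- r'), (Rmax r 0). split; [lra | split].
  - split; [apply Rmax_r | apply Rmax_lub_lt; lra].
  - intros q Hq. specialize (Hlow q Hq).
    pose proof (Rmax_l r 0). specialize (Hup q Hq). lra.
Qed.

Lemma pow_le_pow_le1 (x : R) (m n : nat) :
  0 <= x <= 1 -> (m <= n)%nat -> x ^ n <= x ^ m.
Proof.
  intros Hx Hmn. replace n with (m + (n - m))%nat by lia. rewrite pow_add.
  assert (0 <= x ^ m) by (apply pow_le; lra).
  assert (x ^ (n - m) <= 1) by (rewrite <- (pow1 (n - m)); apply pow_incr; lra).
  nra.
Qed.

Lemma INR_mul_pow_le (x : R) (n : nat) : 0 <= x < 1 -> INR n * x ^ n <= / (1 - x).
Proof.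
  intros Hx.
  assert (Hgeom : INR n * x ^ n * (1 - x) + x ^ n <= 1).
  { induction n as [|n IH]; [simpl; lra |].
    assert (x ^ S n <= 1) by (rewrite <- (pow1 (S n)); apply pow_incr; lra).
    rewrite S_INR. simpl in *. nra. }
  assert (0 <= x ^ n) by (apply pow_le; lra).
  apply Rmult_le_reg_r with (1 - x); [lra |].
  rewrite Rinv_l by lra. lra.
Qed.

(* With tau^3 >= x one has n^2 x^n <= (n tau^n)^2 tau^n <= tau^n / (1 - tau)^2. *)
Lemma Un_cv_sqr_mul_pow (x : R) : 0 <= x < 1 -> Un_cv (fun n => INR n ^ 2 * x ^ n) 0.
Proof.
  intros Hx eps Heps.
  set (tau := 1 - (1 - x) / 3).
  assert (Htau : 0 <= tau < 1) by (unfold tau; lra).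
  assert (Hx3 : x <= tau ^ 3).
  { unfold tau. set (t := (1 - x) / 3).
    assert (0 <= t * t * (3 - t)) by (apply Rmult_le_pos; [nra | unfold t; lra]).
    replace x with (1 - 3 * t) at 1 by (unfold t; field). simpl. nra. }
  destruct (pow_lt_1_zero tau ltac:(rewrite Rabs_right; lra) (eps * (1 - tau) ^ 2))
    as [N HN]; [apply Rmult_lt_0_compat; [lra | apply pow_lt; lra] |].
  exists N. intros n Hn. unfold R_dist. rewrite Rminus_0_r.
  specialize (HN n Hn). rewrite Rabs_right in HN by (apply Rle_ge, pow_le; lra).
  assert (Hnn : 0 <= INR n) by apply pos_INR.
  assert (Hxn : 0 <= x ^ n) by (apply pow_le; lra).
  assert (Htaun : 0 <= tau ^ n) by (apply pow_le; lra).
  assert (Hmul : INR n * tau ^ n * (1 - tau) <= 1).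
  { pose proof (INR_mul_pow_le tau n Htau).
    apply Rmult_le_reg_r with (/ (1 - tau)); [apply Rinv_0_lt_compat; lra |].
    rewrite Rmult_assoc, Rinv_r by lra. lra. }
  assert (Hpow : x ^ n <= (tau ^ n) ^ 3).
  { rewrite <- pow_mult, Nat.mul_comm, pow_mult. apply pow_incr; lra. }
  assert (Hy : (INR n * tau ^ n * (1 - tau)) ^ 2 <= 1).
  { assert (0 <= INR n * tau ^ n * (1 - tau))
      by (apply Rmult_le_pos; [apply Rmult_le_pos |]; lra).
    set (y := INR n * tau ^ n * (1 - tau)) in *.
    rewrite <- (pow1 2). apply pow_incr. lra. }
  assert (Hbound : INR n ^ 2 * x ^ n * (1 - tau) ^ 2 < eps * (1 - tau) ^ 2).
  { apply Rle_lt_trans with (tau ^ n); [| exact HN].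
    apply Rle_trans with ((INR n * tau ^ n * (1 - tau)) ^ 2 * tau ^ n).
    - replace ((INR n * tau ^ n * (1 - tau)) ^ 2 * tau ^ n)
        with (INR n ^ 2 * (tau ^ n) ^ 3 * (1 - tau) ^ 2) by ring.
      apply Rmult_le_compat_r; [apply pow_le; lra |].
      apply Rmult_le_compat_l; [apply pow_le; lra | exact Hpow].
    - apply Rle_trans with (1 * tau ^ n); [apply Rmult_le_compat_r |]; lra. }
  rewrite Rabs_right by (apply Rle_ge, Rmult_le_pos; [apply pow_le |]; lra).
  apply Rmult_lt_reg_r with ((1 - tau) ^ 2); [apply pow_lt; lra | exact Hbound].
Qed.

Lemma C_nonneg (n k : nat) : 0 <= Binomial.C n k.
Proof.
  unfold Binomial.C. apply Rlt_le, Rdiv_lt_0_compat;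
    [| apply Rmult_lt_0_compat]; apply INR_fact_lt_0.
Qed.

Lemma C_le_INR_pow (n k : nat) : (k <= n)%nat -> Binomial.C n k <= INR n ^ k.
Proof.
  induction k as [|k IH]; intros Hk.
  - unfold Binomial.C. rewrite Nat.sub_0_r. simpl.
    assert (Hfact : INR (fact n) <> 0) by apply INR_fact_neq_0.
    right. field. exact Hfact.
  - rewrite pascal_step3 by lia. change (INR n ^ S k) with (INR n * INR n ^ k).
    assert (Hsub : INR (n - k) <= INR n) by (apply le_INR; lia).
    assert (HSk : 1 <= INR (S k)) by (apply (le_INR 1); lia).
    assert (Hratio : INR (n - k) / INR (S k) <= INR n).
    { apply Rle_trans with (INR (n - k)); [| exact Hsub].
      unfold Rdiv. rewrite <- (Rmult_1_r (INR (n - k))) at 2.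
      apply Rmult_le_compat_l; [apply pos_INR |].
      rewrite <- Rinv_1. apply Rinv_le_contravar; lra. }
    apply Rmult_le_compat; [| apply C_nonneg | exact Hratio | apply IH; lia].
    apply Rmult_le_pos; [apply pos_INR | apply Rlt_le, Rinv_0_lt_compat; lra].
Qed.

Lemma C_mul_pow_le (N a : nat) (rho : R) :
  0 <= rho <= 1 -> INR N * rho ^ N <= 1 -> (1 <= a <= N - 1)%nat ->
  Binomial.C N a * rho ^ (2 * (a * (N - a))) <= INR N * rho ^ N.
Proof.
  intros Hrho HN Ha.
  assert (Hsmall : forall k, (1 <= k)%nat -> (2 * k <= N)%nat ->
            Binomial.C N k * rho ^ (2 * (k * (N - k))) <= INR N * rho ^ N).
  { intros k Hk1 Hk2.
    assert (HNpos : 0 <= INR N * rho ^ N)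
      by (apply Rmult_le_pos; [apply pos_INR | apply pow_le; lra]).
    apply Rle_trans with (INR N ^ k * rho ^ (N * k)).
    - apply Rmult_le_compat; [apply C_nonneg | apply pow_le; lra | |].
      + apply C_le_INR_pow. lia.
      + apply pow_le_pow_le1; [lra | nia].
    - rewrite pow_mult, <- Rpow_mult_distr.
      rewrite <- (pow_1 (INR N * rho ^ N)) at 2.
      apply pow_le_pow_le1; [lra | exact Hk1]. }
  destruct (Nat.le_gt_cases (2 * a) N) as [Hle | Hgt].
  - apply Hsmall; lia.
  - rewrite pascal_step1 by lia.
    replace (a * (N - a))%nat with ((N - a) * (N - (N - a)))%nat by nia.
    apply Hsmall; lia.
Qed.

Lemma Rabs_powerRZ_le (q m : R) (s : Z) :
  0 < m -> m <= Rabs q <= 1 -> Rabs (powerRZ q s) <= (/ m) ^ Z.abs_nat s.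
Proof.
  intros Hm Hq.
  assert (Hinv : 1 <= / m).
  { rewrite <- Rinv_1. apply Rinv_le_contravar; lra. }
  destruct s as [|p|p]; simpl.
  - rewrite Rabs_R1. lra.
  - rewrite <- RPow_abs. apply Rle_trans with 1.
    + rewrite <- (pow1 (Pos.to_nat p)). apply pow_incr. split; [apply Rabs_pos | lra].
    + apply pow_R1_Rle. lra.
  - rewrite Rabs_inv, <- RPow_abs, pow_inv. apply Rinv_le_contravar.
    + apply pow_lt. lra.
    + apply pow_incr. lra.
Qed.

Lemma Rabs_sum_f_le (f : nat -> R) (m n : nat) (B : R) : (m <= n)%nat ->
  (forall i, (m <= i <= n)%nat -> Rabs (f i) <= B) ->
  Rabs (sum_f m n f) <= INR (S (n - m)) * B.
Proof.
  intros Hmn Hf. unfold sum_f.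
  eapply Rle_trans; [apply sum_f_R0_triangle |].
  eapply Rle_trans; [apply sum_Rle with (Bn := fun _ => B) |].
  - intros i Hi. apply Hf. lia.
  - rewrite sum_cte. right. ring.
Qed.

(* [2 <= N] matters: for N <= 1 the sum [sum_f 1 (N - 1)] is not empty but the term a = 1. *)
Lemma lemma_sum_abs_le (b : nat -> nat -> R -> R) (s : Z) (N : nat) (q rho M c : R) :
  (2 <= N)%nat -> q <> 0 -> 0 <= rho <= 1 -> Rabs q <= rho ^ 2 ->
  INR N * rho ^ N <= 1 -> 0 <= M ->
  (forall a, (1 <= a <= N - 1)%nat -> Rabs (b N a q) <= M) ->
  Rabs (powerRZ q s) <= c ->
  Rabs (lemma_sum b s N q) <= M * c * (INR N ^ 2 * rho ^ N).
Proof.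
  intros HN Hq0 Hrho Hq HNrho HM Hb Hc.
  assert (Hc0 : 0 <= c) by (eapply Rle_trans; [apply Rabs_pos | exact Hc]).
  assert (Hterm0 : 0 <= M * c * (INR N * rho ^ N))
    by (apply Rmult_le_pos; [nra | apply Rmult_le_pos; [apply pos_INR | apply pow_le; lra]]).
  assert (Hterm : forall a, (1 <= a <= N - 1)%nat ->
    Rabs (Binomial.C N a * b N a q * powerRZ q (Z.of_nat (a * (N - a)) + s))
      <= M * c * (INR N * rho ^ N)).
  { intros a Ha.
    rewrite powerRZ_add, <- pow_powerRZ, !Rabs_mult, <- RPow_abs by exact Hq0.
    rewrite (Rabs_right (Binomial.C N a)) by apply Rle_ge, C_nonneg.
    assert (Hpow : Rabs q ^ (a * (N - a)) <= rho ^ (2 * (a * (N - a)))).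
    { rewrite (pow_mult rho). apply pow_incr. split; [apply Rabs_pos | exact Hq]. }
    assert (Hdom : Binomial.C N a * Rabs q ^ (a * (N - a)) <= INR N * rho ^ N).
    { eapply Rle_trans; [| apply (C_mul_pow_le N a rho); assumption].
      apply Rmult_le_compat_l; [apply C_nonneg | exact Hpow]. }
    replace (Binomial.C N a * Rabs (b N a q) * (Rabs q ^ (a * (N - a)) * Rabs (powerRZ q s)))
      with (Rabs (b N a q) * Rabs (powerRZ q s) * (Binomial.C N a * Rabs q ^ (a * (N - a))))
      by ring.
    apply Rmult_le_compat; [| apply Rmult_le_pos; [apply C_nonneg | apply pow_le, Rabs_pos] | |].
    - apply Rmult_le_pos; apply Rabs_pos.
    - apply Rmult_le_compat; [apply Rabs_pos | apply Rabs_pos | apply Hb, Ha | exact Hc].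
    - exact Hdom. }
  unfold lemma_sum.
  eapply Rle_trans; [apply Rabs_sum_f_le; [lia | exact Hterm] |].
  replace (S (N - 1 - 1)) with (N - 1)%nat by lia.
  rewrite minus_INR, INR_1 by lia.
  replace (M * c * (INR N ^ 2 * rho ^ N)) with (INR N * (M * c * (INR N * rho ^ N))) by ring.
  apply Rmult_le_compat_r; lra.
Qed.

Lemma lemma_sum_uniform_bound (K : R -> Prop) (s : Z) (b : nat -> nat -> R -> R) :
  compact K -> (forall q, K q -> -1 < q < 0) ->
  (exists M : R, forall (N a : nat) (q : R),
     (2 <= N)%nat -> (1 <= a <= N - 1)%nat -> K q -> Rabs (b N a q) <= M) ->
  exists rho L, 0 <= rho < 1 /\ 0 <= L /\
    forall (N : nat) (q : R), (2 <= N)%nat -> INR N * rho ^ N <= 1 -> K q ->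
      Rabs (lemma_sum b s N q) <= L * (INR N ^ 2 * rho ^ N).
Proof.
  intros HK HKsub [M HM].
  destruct (compact_abs_bounds K HK) as [m [r [Hm [Hr Hmr]]]].
  { intros q Hq. specialize (HKsub q Hq). rewrite Rabs_left; lra. }
  set (c := (/ m) ^ Z.abs_nat s).
  exists ((1 + r) / 2), (Rabs M * c). split; [lra | split].
  - apply Rmult_le_pos; [apply Rabs_pos | apply pow_le, Rlt_le, Rinv_0_lt_compat; lra].
  - intros N q HN HNrho Hq. specialize (Hmr q Hq).
    apply lemma_sum_abs_le; [exact HN | specialize (HKsub q Hq); lra | lra | nra
      | exact HNrho | apply Rabs_pos | |].
    + intros a Ha. eapply Rle_trans; [apply HM; [exact HN | exact Ha | exact Hq] |].
      apply Rle_abs.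
    + apply Rabs_powerRZ_le; [exact Hm | lra].
Qed.

Theorem lemma2p3
  (K : R -> Prop) (s : Z) (b : nat -> nat -> R -> R)
  (HK : compact K)
  (HKsub : forall q, K q -> -1 < q < 0)
  (Hbd : exists M : R, forall (N a : nat) (q : R),
           (2 <= N)%nat -> (1 <= a <= N - 1)%nat -> K q ->
           Rabs (b N a q) <= M) :
  forall eps : R, 0 < eps ->
    exists N0 : nat, forall N : nat, (N0 <= N)%nat ->
      forall q : R, K q -> Rabs (lemma_sum b s N q) <= eps.
Proof.
  intros eps Heps.
  destruct (lemma_sum_uniform_bound K s b HK HKsub Hbd) as [rho [L [Hrho [HL Hsum]]]].
  destruct (Un_cv_sqr_mul_pow rho Hrho (Rmin 1 (eps / (L + 1)))) as [N0 HN0].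
  { apply Rmin_pos; [lra | apply Rdiv_lt_0_compat; lra]. }
  exists (Nat.max N0 2). intros N HN q Hq.
  specialize (HN0 N ltac:(lia)). unfold R_dist in HN0.
  assert (HN1 : 1 <= INR N) by (apply (le_INR 1); lia).
  assert (HNrho0 : 0 <= INR N * rho ^ N)
    by (apply Rmult_le_pos; [lra | apply pow_le; lra]).
  assert (Hsq : INR N ^ 2 * rho ^ N = INR N * (INR N * rho ^ N)) by ring.
  rewrite Rminus_0_r, Rabs_right in HN0 by (rewrite Hsq; apply Rle_ge; nra).
  pose proof (Rmin_l 1 (eps / (L + 1))) as Hmin_1.
  pose proof (Rmin_r 1 (eps / (L + 1))) as Hmin_eps.
  assert (HNrho : INR N * rho ^ N <= 1) by (rewrite Hsq in HN0; nra).
  eapply Rle_trans; [apply Hsum; [lia | exact HNrho | exact Hq] |].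
  apply Rle_trans with ((L + 1) * (eps / (L + 1))).
  - apply Rmult_le_compat; [lra | rewrite Hsq; nra | lra | lra].
  - right. field. lra.
Qed.
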